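(* Let $n\ge 1$, $N=\{1,\dots,n\}$, $A=(a_{ij})\in[0,1]^{n\times n}$ and $\lambda\in[0,+\infty)$. Let $x=(x_1,\dots,x_n)\in[0,1]^n$ with $x\neq\theta$. Then $x\in V(A,\lambda)$ if and only if there exists $k=(k_1,\dots,k_n)\in K$ such that $$q_{(k_j-1)j}\le x_j\le q_{k_jj}\ \text{ for all } j\in N,\qquad \sum_{j\in N}\big[\delta_{ij}\, x_j+(1-\delta_{ij})\, a_{ij}\big]=\lambda x_i\ \text{ for all } i\in N,$$ where $\delta_{ij}$ (depending on $k$) is as defined in the context.
   Context: $\theta=(0,\dots,0)\in[0,1]^n$. For $x\in[0,1]^n$ and $\lambda\in[0,+\infty)$, the equation $A\odot x^T=\lambda x^T$ means $\sum_{j\in N}\min\{a_{ij},x_j\}=\lambda x_i$ for every $i\in N$ (ordinary addition and multiplication). $V(A,\lambda)=\{x\in[0,1]^n : A\odot x^T=\lambda x^T,\ x\neq\theta\}$ is the set of eigenvectors of $A$ associated with $\lambda$. For each $j\in N$, let $t_j$ be the number of distinct values in $\{a_{ij}: i\in N\}\cap(0,1)$, list these values as $q_{1j}<q_{2j}<\dots<q_{t_jj}$, and put $q_{0j}=0$, $q_{(t_j+1)j}=1$, $Q_j=\{q_{0j},\dots,q_{(t_j+1)j}\}$. Let $K_j=\{k: q_{kj}\in Q_j,\ q_{kj}>0\}=\{1,\dots,t_j+1\}$ and $K=K_1\times\dots\times K_n$. For $k=(k_1,\dots,k_n)\in K$ and $i,j\in N$, set $\delta_{ij}=1$ if $q_{k_jj}\le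 a_{ij}$ and $\delta_{ij}=0$ if $a_{ij}\le q_{(k_j-1)j}$ (exactly one of these holds since $a_{ij}\in Q_j$). *)

From HB Require Import structures.
From mathcomp Require Import all_boot all_order all_algebra.
From mathcomp Require Import reals.
Set Implicit Arguments. Unset Strict Implicit. Unset Printing Implicit Defensive.
Import Order.TTheory GRing.Theory Num.Theory.
Local Open Scope ring_scope.

Section MaxPlus.
Variables (R : realType) (n : nat).

Definition theta : 'I_n -> R := fun _ => 0.

Definition eigen_eq (A : 'M[R]_n) (lam : R) (x : 'I_n -> R) : Prop :=
  forall i : 'I_n, \sum_(j < n) Num.min (A i j) (x j) = lam * x i.

Definition in_V (A : 'M[R]_n) (lam : R) (x : 'I_n -> R) : Prop :=
  (forall j, 0 <= x j <= 1) /\ eigen_eq A lam x /\ x <> theta.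

Definition qseq (A : 'M[R]_n) (j : 'I_n) : seq R :=
  sort <=%R (undup [seq A i j | i <- enum 'I_n & (0 < A i j) && (A i j < 1)]).

Definition t_ (A : 'M[R]_n) (j : 'I_n) : nat := size (qseq A j).

Definition q (A : 'M[R]_n) (j : 'I_n) (k : nat) : R :=
  if k == 0%N then 0
  else if (k <= t_ A j)%N then nth 0 (qseq A j) k.-1 else 1.

Definition inK (A : 'M[R]_n) (k : 'I_n -> nat) : Prop :=
  forall j, (1 <= k j <= (t_ A j).+1)%N.

(* delta_ij (depending on k): 1 if q_{k_j j} <= a_ij, 0 otherwise
   (otherwise a_ij <= q_{(k_j - 1) j}, since a_ij in Q_j) *)
Definition delta (A : 'M[R]_n) (k : 'I_n -> nat) (i j : 'I_n) : R :=
  if q A j (k j) <= A i j then 1 else 0.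

End MaxPlus.

(** A column [j] of [A] takes its values in [Q_j = {q_0j < ... < q_(t_j+1)j}],
    so on each bracket [q_(k-1)j <= x_j <= q_kj] the function
    [x_j |-> min(a_ij, x_j)] is either the identity (when [q_kj <= a_ij]) or
    the constant [a_ij] (otherwise [a_ij <= q_(k-1)j]).  Every [x_j] in
    [[0,1]] lies in some bracket, so the nonlinear eigen-equation coincides
    with the linear one attached to the brackets containing [x]. *)

From HB Require Import structures.
From mathcomp Require Import all_boot all_order all_algebra.
From mathcomp Require Import reals.
Set Implicit Arguments. Unset Strict Implicit.
Import Order.TTheory GRing.Theory Num.Theory.
Local Open Scope ring_scope.

Section ColumnLevels.
Variables (R : realType) (n : nat) (A : 'M[R]_n) (j : 'I_n).

Lemma mem_qseq_itv y : y \in qseq A j -> 0 < y < 1.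
Proof.
rewrite /qseq mem_sort mem_undup => /mapP [i].
by rewrite mem_filter => /andP [y01 _] ->.
Qed.

Lemma entry_mem_qseq i : 0 < A i j < 1 -> A i j \in qseq A j.
Proof.
move=> Aij01; rewrite /qseq mem_sort mem_undup; apply/mapP; exists i => //.
by rewrite mem_filter Aij01 mem_enum.
Qed.

Lemma q_nth m : (0 < m <= t_ A j)%N -> q A j m = nth 0 (qseq A j) m.-1.
Proof. by case: m => // m /= mt; rewrite /q /= mt. Qed.

Lemma q_last : q A j (t_ A j).+1 = 1.
Proof. by rewrite /q /= ltnn. Qed.

Lemma q_gt_t m : (t_ A j < m)%N -> q A j m = 1.
Proof. by case: m => // m; rewrite /q ltnNge => /negPf ->. Qed.

Lemma q_itv m : 0 <= q A j m <= 1.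
Proof.
case: m => [|m]; first by rewrite /q /= lexx ler01.
case: (leqP m.+1 (t_ A j)) => [mt|/q_gt_t ->]; last by rewrite ler01 lexx.
rewrite q_nth //=; have /mem_qseq_itv/andP [y0 y1] : nth 0 (qseq A j) m \in qseq A j.
  exact: mem_nth.
by rewrite !ltW.
Qed.

Lemma q_homo : {homo q A j : m p / (m <= p)%N >-> m <= p}.
Proof.
move=> m p mp; case: m mp => [|m] mp; first by case/andP: (q_itv p).
case: (leqP p (t_ A j)) => [pt|/q_gt_t ->]; last by case/andP: (q_itv m.+1).
have mt : (m.+1 <= t_ A j)%N by apply: leq_trans pt.
have p_gt0 : (0 < p)%N by apply: leq_trans mp.
rewrite !q_nth ?mt ?p_gt0 //=.
apply: (sorted_leq_nth le_trans lexx); first exact/sort_sorted/le_total.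
- by rewrite inE.
- by rewrite inE -/(t_ A j) prednK.
- by rewrite -ltnS prednK.
Qed.

Lemma entry_in_levels i : 0 <= A i j <= 1 ->
  exists2 m, (m <= (t_ A j).+1)%N & A i j = q A j m.
Proof.
case/andP => Aij0 Aij1.
have [Aij_gt0|Aij_le0] := ltrP 0 (A i j); last first.
  by exists 0%N => //; apply/le_anti; rewrite Aij0 Aij_le0.
have [Aij_lt1|Aij_ge1] := ltrP (A i j) 1; last first.
  by exists (t_ A j).+1; rewrite // q_last; apply/le_anti; rewrite Aij1 Aij_ge1.
have Aij_in : A i j \in qseq A j by apply: entry_mem_qseq; rewrite Aij_gt0.
exists (index (A i j) (qseq A j)).+1; first by rewrite ltnS ltnW ?index_mem.
by rewrite q_nth /= ?index_mem ?nth_index.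
Qed.

Lemma entry_lt_q_le_pred i k : 0 <= A i j <= 1 ->
  A i j < q A j k -> A i j <= q A j k.-1.
Proof.
move=> /entry_in_levels [m _ ->] qm_lt_qk.
have [km|mk] := leqP k m; first by rewrite ltNge q_homo in qm_lt_qk.
by apply: q_homo; rewrite -ltnS prednK // (leq_ltn_trans _ mk).
Qed.

Lemma exists_bracket y : 0 <= y <= 1 ->
  exists2 k, (0 < k <= (t_ A j).+1)%N & q A j k.-1 <= y <= q A j k.
Proof.
case/andP => y0 y1.
have ex_k : exists k, (0 < k)%N && (y <= q A j k).
  by exists (t_ A j).+1; rewrite q_last.
case: (ex_minnP ex_k) => k /andP [k_gt0 y_le_qk] k_min.
exists k; first by rewrite k_gt0 k_min // q_last.
rewrite y_le_qk andbT; case: k k_gt0 y_le_qk k_min => // [[|k]] // _ _ k_min.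
rewrite leNgt; apply/negP => /ltW y_le_qk.
by have := k_min k.+1; rewrite y_le_qk ltnn => /(_ isT).
Qed.

End ColumnLevels.

Lemma min_bracketE (R : realType) (n : nat) (A : 'M[R]_n) (k : 'I_n -> nat)
    (i j : 'I_n) (y : R) :
  0 <= A i j <= 1 -> q A j (k j).-1 <= y <= q A j (k j) ->
  Num.min (A i j) y = delta A k i j * y + (1 - delta A k i j) * A i j.
Proof.
move=> Aij01 /andP [lo_le_y y_le_hi]; rewrite /delta.
case: ifP => [hi_le_Aij|/negbT]; rewrite ?subrr ?subr0 ?mul0r ?mul1r ?addr0 ?add0r.
  by apply/min_idPr; apply: le_trans y_le_hi hi_le_Aij.
rewrite -ltNge => Aij_lt_hi; apply/min_idPl.
exact: le_trans (entry_lt_q_le_pred Aij01 Aij_lt_hi) lo_le_y.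
Qed.

Lemma sum_min_bracketE (R : realType) (n : nat) (A : 'M[R]_n) (k : 'I_n -> nat)
    (x : 'I_n -> R) (i : 'I_n) :
  (forall j, 0 <= A i j <= 1) ->
  (forall j, q A j (k j).-1 <= x j <= q A j (k j)) ->
  \sum_(j < n) Num.min (A i j) (x j)
    = \sum_(j < n) (delta A k i j * x j + (1 - delta A k i j) * A i j).
Proof. by move=> A01 x_in; apply: eq_bigr => j _; apply: min_bracketE. Qed.

Theorem theorem3p1 (R : realType) (n : nat) (hn : (1 <= n)%N)
  (A : 'M[R]_n) (hA : forall i j, 0 <= A i j <= 1)
  (lam : R) (hlam : 0 <= lam)
  (x : 'I_n -> R) (hx : forall j, 0 <= x j <= 1) (hxne : x <> @theta R n) :
  in_V A lam x <->
  exists k : 'I_n -> nat,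
    inK A k /\
    (forall j, q A j (k j).-1 <= x j <= q A j (k j)) /\
    (forall i, \sum_(j < n) (delta A k i j * x j + (1 - delta A k i j) * A i j)
               = lam * x i).
Proof.
split=> [[_ [x_eigen _]] | [k [_ [x_in x_lin]]]].
- have [k k_in x_in] := fin_all_exists2 (fun j => exists_bracket A j (hx j)).
  exists k; split; [exact: k_in | split=> // i].
  by rewrite -x_eigen (sum_min_bracketE (hA i) x_in).
- by split=> //; split=> // i; rewrite (sum_min_bracketE (hA i) x_in).
Qed.
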